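(* Let $n$ be a positive integer and let $\frac{a_1}{b_1} < \frac{a_2}{b_2} < \cdots$ be the Farey sequence of order $n$. If $k < l$ are indices with $$l - k \le \frac{n}{12}\left(1 - \frac{4}{n^{1/3}}\right),$$ then $(a_l - a_k)(b_l - b_k) \ge 0$, i.e. $\frac{a_k}{b_k}$ and $\frac{a_l}{b_l}$ are similarly ordered.
   Context: The Farey sequence of order $n$ is the increasing list of all reduced fractions $\frac{a}{b}$ with $0 \le \frac{a}{b} \le 1$ and $1 \le b \le n$ (including $\frac01$ and $\frac11$), each written in lowest terms, indexed in increasing order. Two fractions $\frac{a}{b}, \frac{a'}{b'}$ in lowest terms are called similarly ordered if $(a'-a)(b'-b) \ge 0$. *)

From Stdlib Require Import Reals ZArith.
From mathcomp Require Import all_boot.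

(* p <= q as rationals (denominators positive): p.1 * q.2 <= q.1 * p.2 *)
Definition frac_le (p q : nat * nat) : bool := (p.1 * q.2 <= q.1 * p.2)%N.

(* All reduced fractions a/b with 0 <= a <= b and 1 <= b <= n
   (lowest terms: coprime a b; note 0/b is reduced iff b = 1). *)
Definition farey_fracs (n : nat) : seq (nat * nat) :=
  [seq p <- [seq (a, b) | b <- iota 1 n, a <- iota 0 b.+1] | coprime p.1 p.2].

(* The Farey sequence of order n, listed in increasing order (0-based). *)
Definition farey (n : nat) : seq (nat * nat) := sort frac_le (farey_fracs n).

Definition farey_num (n i : nat) : nat := (nth (0, 1) (farey n) i).1.
Definition farey_den (n i : nat) : nat := (nth (0, 1) (farey n) i).2.

Example farey5 : farey 5 = [:: (0,1);(1,5);(1,4);(1,3);(2,5);(1,2);(3,5);(2,3);(3,4);(4,5);(1,1)].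
Proof. vm_compute. reflexivity. Qed.

(* Consecutive fractions a/b < a'/b' of the Farey sequence of order n satisfy
   a'b - ab' = 1 and b + b' > n, so their gap is 1/(bb'), which is at most 4/n^2
   unless one of b, b' is at most n/2.  Charging every fraction with such a small
   denominator b the amount max(0, n/(4b) - 1/2), n^2/4 times each gap is at most
   1 plus the charges of its two ends, and between two successive fractions with
   small denominators the charges are paid by n^2/8 times the gap itself.  If k < l
   but a_k < a_l and b_l < b_k, then a_l/b_l - a_k/b_k >= (1 + a_l/b_l)/n, and all
   denominators from k to l are at least 2; summing the gaps from k to l, only the
   charges of the first and last small denominators remain, and they are too small
   to prevent l - k >= n/12. *)

From Stdlib Require Import Reals ZArith Lra Lia Psatz.
From mathcomp Require Import all_boot zify.

Set Implicit Arguments.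
Unset Strict Implicit.
Unset Printing Implicit Defensive.

Lemma coprime_frac_eq (a b c d : nat) : 0 < b -> 0 < d ->
  coprime a b -> coprime c d -> a * d = c * b -> (a, b) = (c, d).
Proof.
move=> b_gt0 d_gt0 cop_ab cop_cd e.
have b_dvd_d : b %| d.
  by rewrite -(@Gauss_dvdr b a) 1?coprime_sym // e dvdn_mull.
have d_dvd_b : d %| b.
  by rewrite -(@Gauss_dvdr d c) 1?coprime_sym // -e dvdn_mull.
have bd : b = d by apply/eqP; rewrite eqn_dvd b_dvd_d d_dvd_b.
by move: e; rewrite bd => /eqP; rewrite eqn_pmul2r // => /eqP ->.
Qed.

Lemma den_ge_between_det1 (a b c e p q : nat) :
  c * b = a * e + 1 -> a * q < p * b -> p * e < c * q -> b + e <= q.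
Proof. by move=> *; nia. Qed.

Lemma det1_successor_exists (n a b : nat) : 0 < b -> b <= n -> coprime a b ->
  exists c e, [/\ c * b = a * e + 1, e <= n & n < b + e].
Proof.
move=> b_gt0 b_le_n cop_ab.
case: (egcdnP a b_gt0) => c0 e0; rewrite gcdnC (eqP cop_ab) muln1 => det0 e0_lt_b.
pose t := (n - e0) %/ b.
have t_le : t * b <= n - e0 := leq_divM _ _.
have t_gt : n - e0 < b + t * b by rewrite -mulSn ltn_ceil.
clearbody t; exists (c0 + t * a), (e0 + t * b); split; [nia | lia | lia].
Qed.

Lemma farey_fracs_mem n a b :
  ((a, b) \in farey_fracs n) = [&& 0 < b, b <= n, a <= b & coprime a b].
Proof.
rewrite /farey_fracs mem_filter; apply/andP/and4P => [[cop] | [? ? ? cop]].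
  case/allpairsPdep=> b' [a' [+ + [ea eb]]]; subst a' b'.
  by rewrite !mem_iota => ? ?; split=> //; lia.
by split=> //; apply/allpairsPdep; exists b, a; rewrite !mem_iota; split=> //; lia.
Qed.

Lemma farey_mem n p :
  (p \in farey n) = [&& 0 < p.2, p.2 <= n, p.1 <= p.2 & coprime p.1 p.2].
Proof. by case: p => a b; rewrite /farey mem_sort farey_fracs_mem. Qed.

Lemma farey_uniq n : uniq (farey n).
Proof.
rewrite /farey sort_uniq filter_uniq // allpairs_uniq_dep ?iota_uniq //.
- by move=> b _; apply: iota_uniq.
- by move=> [? ?] [? ?] _ _ [-> ->].
Qed.

Lemma farey_sorted n : sorted frac_le (farey n).
Proof. by apply: sort_sorted => p q; apply: leq_total. Qed.

Section FareyNeighbours.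

Variable n : nat.
Local Notation F := (farey n).
Local Notation num := (farey_num n).
Local Notation den := (farey_den n).

Lemma farey_nthE i : nth (0, 1) F i = (num i, den i).
Proof. by rewrite /farey_num /farey_den; case: nth. Qed.

Lemma farey_nth_spec i : i < size F ->
  [/\ 0 < den i, den i <= n, num i <= den i & coprime (num i) (den i)].
Proof. by move=> lt_i; apply/and4P; have := mem_nth (0, 1) lt_i; rewrite farey_nthE farey_mem. Qed.

Lemma farey_nth_le i j : i <= j -> j < size F -> num i * den j <= num j * den i.
Proof.
move=> le_ij lt_j; pose P := [pred p : nat * nat | 0 < p.2].
have frac_le_trans : {in P & &, transitive frac_le}.
  by move=> q p r /= q_gt0 _ _; rewrite /frac_le => le_pq le_qr; rewrite -(leq_pmul2l q_gt0); nia.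
have frac_le_refl : {in P, reflexive frac_le} by move=> p; rewrite /frac_le.
have F_P : all P F by apply/allP => p; rewrite farey_mem => /and4P[].
have := sorted_leq_nth_in frac_le_trans frac_le_refl (0, 1) F_P (farey_sorted n).
by move=> /(_ i j); rewrite !inE !farey_nthE; apply=> //; apply: leq_ltn_trans lt_j.
Qed.

Lemma farey_nth_lt i j : i < j -> j < size F -> num i * den j < num j * den i.
Proof.
move=> lt_ij lt_j; have lt_i := ltn_trans lt_ij lt_j.
rewrite ltn_neqAle farey_nth_le ?(ltnW lt_ij) // andbT; apply/eqP => eq_ij.
have [bi_gt0 _ _ cop_i] := farey_nth_spec lt_i.
have [bj_gt0 _ _ cop_j] := farey_nth_spec lt_j.
move/eqP: (coprime_frac_eq bi_gt0 bj_gt0 cop_i cop_j eq_ij).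
by rewrite -!farey_nthE nth_uniq ?farey_uniq // (ltn_eqF lt_ij).
Qed.

Lemma farey_consecutive i : i.+1 < size F ->
  num i.+1 * den i = num i * den i.+1 + 1 /\ n < den i + den i.+1.
Proof.
move=> lt_i1; have lt_i := ltnW lt_i1.
have [b_gt0 b_le_n _ cop_ab] := farey_nth_spec lt_i.
have [_ b'_le_n a'_le_b' _] := farey_nth_spec lt_i1.
have lt_succ := farey_nth_lt (ltnSn i) lt_i1.
have [c [e [det e_le_n n_lt_be]]] := det1_successor_exists b_gt0 b_le_n cop_ab.
have a_lt_b : num i < den i by nia.
have ce_in_F : (c, e) \in F.
  rewrite farey_mem /=; apply/and4P; split; [lia | done | nia |].
  by apply/coprimeP; [nia | exists (den i, num i); rewrite /=; lia].
pose u := index (c, e) F.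
have lt_u : u < size F by rewrite index_mem.
have nth_u : (num u, den u) = (c, e) by rewrite -farey_nthE nth_index.
case: nth_u => num_u den_u.
have lt_iu : i < u.
  by rewrite ltnNge; apply/negP => /farey_nth_le /(_ lt_i); rewrite num_u den_u; lia.
have u_eq : u = i.+1.
  apply/eqP; rewrite eqn_leq lt_iu andbT leqNgt; apply/negP => lt_i1u.
  have := den_ge_between_det1 det lt_succ; rewrite -num_u -den_u => /(_ (farey_nth_lt lt_i1u lt_u)).
  lia.
by rewrite -u_eq num_u den_u; split; lia.
Qed.

End FareyNeighbours.

Local Open Scope R_scope.

Lemma frac_sub p q r s : q <> 0 -> s <> 0 -> r / s - p / q = (r * q - p * s) / (q * s).
Proof. by move=> q_neq0 s_neq0; field. Qed.

Lemma INR_leq m k : (m <= k)%N -> INR m <= INR k.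
Proof. by move/leP; apply: le_INR. Qed.

Lemma INR_gt0 m : (0 < m)%N -> 0 < INR m.
Proof. by move/ltP; apply: lt_0_INR. Qed.

Lemma INR_subn m k : (m <= k)%N -> INR (k - m) = INR k - INR m.
Proof. by move/leP; apply: minus_INR. Qed.

Lemma Rdiv_le_l x y d : 0 < d -> x <= y * d -> x / d <= y.
Proof.
move=> d_gt0 le_xy; apply: (Rmult_le_reg_r d) => //.
by have -> : x / d * d = x by field; lra.
Qed.

Lemma Rle_div_r x y d : 0 < d -> y * d <= x -> y <= x / d.
Proof.
move=> d_gt0 le_yx; apply: (Rmult_le_reg_r d) => //.
by have -> : x / d * d = x by field; lra.
Qed.

Definition charge (N b : R) : R := Rmax 0 (N / (4 * b) - 1 / 2).

Lemma charge_ge0 N b : 0 <= charge N b.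
Proof. exact: Rmax_l. Qed.

Lemma charge_le N b : 0 <= N -> 0 < b -> charge N b <= N / (4 * b).
Proof.
move=> N_ge0 b_gt0; apply: Rmax_lub; last lra.
apply: Rmult_le_pos => //; apply/Rlt_le/Rinv_0_lt_compat; lra.
Qed.

Lemma charge_eq0 N b : 0 < b -> N <= 2 * b -> charge N b = 0.
Proof.
move=> b_gt0 N_le; apply: Rmax_left.
have -> : N / (4 * b) - 1 / 2 = (N - 2 * b) * / b / 4 by field; lra.
have : 0 < / b by apply: Rinv_0_lt_compat.
nra.
Qed.

Lemma charge_small N b : 0 < b -> 2 * b <= N -> charge N b = N / (4 * b) - 1 / 2.
Proof.
move=> b_gt0 le_2b; apply: Rmax_right.
have -> : N / (4 * b) - 1 / 2 = (N - 2 * b) * / b / 4 by field; lra.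
have : 0 < / b by apply: Rinv_0_lt_compat.
nra.
Qed.

Lemma gap_le_charge N b b' : 0 <= N -> 0 < b -> 0 < b' -> N + 1 <= b + b' ->
  N ^ 2 / (4 * b * b') <= 1 + charge N b + charge N b'.
Proof.
wlog le_bb' : b b' / b <= b'.
  move=> wlog_le N_ge0 b_gt0 b'_gt0 sum_ge; case: (Rle_lt_dec b b') => [|/Rlt_le] le.
    exact: wlog_le.
  have -> : 4 * b * b' = 4 * b' * b by ring.
  rewrite (Rplus_assoc 1) (Rplus_comm (charge N b)) -Rplus_assoc.
  by apply: wlog_le => //; lra.
move=> N_ge0 b_gt0 b'_gt0 sum_ge.
have ch_b : N / (4 * b) - 1 / 2 <= charge N b := Rmax_r _ _.
have ch_b_ge0 := charge_ge0 N b.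
have ch_b'_ge0 := charge_ge0 N b'.
case: (Rle_lt_dec N (2 * b)) => N_2b.
- suff le1 : N ^ 2 / (4 * b * b') <= 1 by lra.
  apply: Rdiv_le_l; first nra.
  have : N * N <= (2 * b) * (2 * b') by apply: Rmult_le_compat; lra.
  lra.
- suff le1 : N ^ 2 / (4 * b * b') <= 1 / 2 + N / (4 * b) by lra.
  apply: Rdiv_le_l; first nra.
  have -> : (1 / 2 + N / (4 * b)) * (4 * b * b') = (N + 2 * b) * b' by field; lra.
  nra.
Qed.

Lemma charge_add_small N b b' : 0 < b -> 0 < b' -> 2 * b <= N -> 2 * b' <= N ->
  charge N b + charge N b' <= N ^ 2 / (8 * b * b').
Proof.
move=> b_gt0 b'_gt0 le_2b le_2b'; rewrite !charge_small //.
have -> : N / (4 * b) - 1 / 2 + (N / (4 * b') - 1 / 2) =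
          (2 * N * b' + 2 * N * b - 8 * b * b') / (8 * b * b') by field; lra.
apply: Rmult_le_compat_r; first by apply/Rlt_le/Rinv_0_lt_compat; nra.
have : 0 <= (N - 2 * b) * (N - 2 * b') by apply: Rmult_le_pos; lra.
nra.
Qed.

Definition farey_val n i : R := INR (farey_num n i) / INR (farey_den n i).

Definition small_den n i : bool := (2 * farey_den n i < n)%N.

Section FareyGaps.

Variable n : nat.
Local Notation F := (farey n).
Local Notation N := (INR n).
Local Notation num := (farey_num n).
Local Notation den := (farey_den n).
Local Notation b i := (INR (den i)).
Local Notation w := (farey_val n).
Local Notation ch i := (charge N (b i)).

Lemma farey_den_gtR0 i : (i < size F)%N -> 0 < b i.
Proof. by case/farey_nth_spec => den_gt0 _ _ _; apply: INR_gt0. Qed.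

Lemma farey_den_leR i : (i < size F)%N -> b i <= N.
Proof. by case/farey_nth_spec => _ den_le _ _; apply: INR_leq. Qed.

Lemma farey_small_denR t : small_den n t -> 2 * b t <= N.
Proof. by move/ltnW/INR_leq; rewrite mult_INR. Qed.

Lemma farey_val_sub i j : (i < size F)%N -> (j < size F)%N ->
  w j - w i = (INR (num j * den i) - INR (num i * den j)) / (b i * b j).
Proof.
by move=> lt_i lt_j; rewrite /farey_val frac_sub ?mult_INR //; apply/Rgt_not_eq/farey_den_gtR0.
Qed.

Lemma farey_val_le i j : (i <= j)%N -> (j < size F)%N -> w i <= w j.
Proof.
move=> le_ij lt_j; have lt_i := leq_ltn_trans le_ij lt_j.
suff : 0 <= w j - w i by lra.
rewrite farey_val_sub //; apply: Rmult_le_pos.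
  by have := INR_leq (farey_nth_le le_ij lt_j); lra.
by apply/Rlt_le/Rinv_0_lt_compat/Rmult_lt_0_compat; apply: farey_den_gtR0.
Qed.

Lemma farey_val_lt i j : (i < j)%N -> (j < size F)%N -> 1 / (b i * b j) <= w j - w i.
Proof.
move=> lt_ij lt_j; have lt_i := ltn_trans lt_ij lt_j.
rewrite farey_val_sub //; apply: Rmult_le_compat_r.
  by apply/Rlt_le/Rinv_0_lt_compat/Rmult_lt_0_compat; apply: farey_den_gtR0.
by have := INR_leq (farey_nth_lt lt_ij lt_j); rewrite S_INR; lra.
Qed.

Lemma farey_gap_le i : (i.+1 < size F)%N -> N ^ 2 / 4 * (w i.+1 - w i) <= 1 + ch i + ch i.+1.
Proof.
move=> lt_i1; have lt_i := ltnW lt_i1.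
have [det n_lt_sum] := farey_consecutive lt_i1.
rewrite farey_val_sub // det plus_INR Rplus_minus_l.
have -> : N ^ 2 / 4 * (1 / (b i * b i.+1)) = N ^ 2 / (4 * b i * b i.+1).
  by field; split; apply/Rgt_not_eq/farey_den_gtR0.
apply: gap_le_charge; [exact: pos_INR | exact: farey_den_gtR0 | exact: farey_den_gtR0 |].
by have := INR_leq n_lt_sum; rewrite plus_INR S_INR.
Qed.

Lemma farey_charge_eq0 t : (t < size F)%N -> ~~ small_den n t -> ch t = 0.
Proof.
move=> lt_t; rewrite /small_den -leqNgt => /INR_leq; rewrite mult_INR => le_N.
by apply: charge_eq0 => //; apply: farey_den_gtR0.
Qed.

Lemma farey_segment i j : (i <= j)%N -> (j < size F)%N ->
  (forall t, (i < t < j)%N -> ~~ small_den n t) ->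
  N ^ 2 / 4 * (w j - w i) <= INR (j - i) + ch i + ch j.
Proof.
have ch_ge0 t : 0 <= ch t := charge_ge0 _ _.
elim: j => [|j IH].
  rewrite leqn0 => /eqP -> _ _; rewrite Rminus_diag Rmult_0_r subnn.
  by have := ch_ge0 0%N; rewrite INR_0; lra.
rewrite leq_eqVlt ltnS => /predU1P [-> _ _ | le_ij lt_j1 big_inside].
  rewrite Rminus_diag Rmult_0_r subnn.
  by have := ch_ge0 j.+1; rewrite INR_0; lra.
rewrite subSn // S_INR; move: le_ij; rewrite leq_eqVlt => /predU1P [-> | lt_ij].
  by rewrite subnn; have := farey_gap_le lt_j1; rewrite INR_0; lra.
have ch_j : ch j = 0.
  by apply: farey_charge_eq0; [exact: ltnW | apply: big_inside; rewrite lt_ij /=].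
have inside : forall t, (i < t < j)%N -> ~~ small_den n t.
  by move=> t /andP [lt_it lt_tj]; apply: big_inside; rewrite lt_it ltnW.
have := IH (ltnW lt_ij) (ltnW lt_j1) inside.
have := farey_gap_le lt_j1.
lra.
Qed.

Lemma farey_segment_one_small i j p : (i <= j)%N -> (j < size F)%N -> p \in [:: i; j] ->
  (forall t, (i <= t <= j)%N -> t != p -> ~~ small_den n t) ->
  N ^ 2 / 4 * (w j - w i) <= INR (j - i) + ch p.
Proof.
move=> le_ij lt_j p_end big_off_p.
move: le_ij; rewrite leq_eqVlt => /predU1P [<- | lt_ij].
  by rewrite Rminus_diag Rmult_0_r subnn INR_0; have := charge_ge0 N (b p); lra.
have off_p t : (i <= t <= j)%N -> t != p -> ch t = 0.
  move=> range_t neq_tp; case/andP: (range_t) => _ le_tj.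
  exact: farey_charge_eq0 (leq_ltn_trans le_tj lt_j) (big_off_p t range_t neq_tp).
have inside t : (i < t < j)%N -> ~~ small_den n t.
  move=> /andP [lt_it lt_tj]; apply: big_off_p; first by rewrite (ltnW lt_it) (ltnW lt_tj).
  move: p_end; rewrite !inE => /orP [] /eqP ->.
    by rewrite gtn_eqF.
  by rewrite ltn_eqF.
have ends : ch i + ch j = ch p.
  move: p_end; rewrite !inE => /orP [] /eqP eq_p; subst p.
    by rewrite (off_p j) ?Rplus_0_r ?leqnn ?(ltnW lt_ij) ?gtn_eqF.
  by rewrite (off_p i) ?Rplus_0_l ?leqnn ?(ltnW lt_ij) ?ltn_eqF.
by have := farey_segment (ltnW lt_ij) lt_j inside; lra.
Qed.

Lemma farey_segment_one_small_half i j p : (i <= j)%N -> (j < size F)%N -> p \in [:: i; j] ->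
  (forall t, (i <= t <= j)%N -> t != p -> ~~ small_den n t) ->
  N ^ 2 / 8 * (w j - w i) - N / (8 * b p) <= INR (j - i).
Proof.
move=> le_ij lt_j p_end big_off_p.
have lt_i := leq_ltn_trans le_ij lt_j.
have lt_p : (p < size F)%N by move: p_end; rewrite !inE => /orP [] /eqP ->.
have bp_gt0 := farey_den_gtR0 lt_p.
have N_ge_bp := farey_den_leR lt_p.
have N_over_bp_ge0 : 0 <= N / (8 * b p).
  by apply: Rmult_le_pos; [lra | apply/Rlt_le/Rinv_0_lt_compat; lra].
move: (le_ij); rewrite leq_eqVlt => /predU1P [<- | lt_ij].
  by rewrite Rminus_diag Rmult_0_r subnn INR_0; lra.
have seg := farey_segment_one_small le_ij lt_j p_end big_off_p.
have ch_le := charge_le (pos_INR n) bp_gt0.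
have den_prod : b i * b j <= N * b p.
  have bi_gt0 := farey_den_gtR0 lt_i; have bj_gt0 := farey_den_gtR0 lt_j.
  have := farey_den_leR lt_i; have := farey_den_leR lt_j.
  by move: p_end; rewrite !inE => /orP [] /eqP ->; nra.
have gap : N / (8 * b p) <= N ^ 2 / 8 * (w j - w i).
  have := farey_val_lt lt_ij lt_j.
  have : 1 / (N * b p) <= 1 / (b i * b j).
    apply: Rmult_le_compat_l; first lra.
    apply: Rinv_le_contravar => //.
    by apply: Rmult_lt_0_compat; apply: farey_den_gtR0.
  have -> : N / (8 * b p) = N ^ 2 / 8 * (1 / (N * b p)) by field; lra.
  have : 0 <= N ^ 2 / 8 by nra.
  nra.
rewrite (_ : N / (4 * b p) = 2 * (N / (8 * b p))) in ch_le; last by field; lra.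
lra.
Qed.

Lemma farey_chain i j : (i <= j)%N -> (j < size F)%N -> small_den n i -> small_den n j ->
  N ^ 2 / 8 * (w j - w i) <= INR (j - i).
Proof.
have [m] := ubnP (j - i); elim: m i j => // m IH i j lt_m le_ij lt_j small_i small_j.
case: (boolP (has (small_den n) (iota i.+1 (j - i.+1)))).
  case/hasP=> t; rewrite mem_iota => /andP [lt_it lt_tj] small_t.
  have {}lt_tj : (t < j)%N by lia.
  have left := IH i t ltac:(lia) (ltnW lt_it) (ltn_trans lt_tj lt_j) small_i small_t.
  have right := IH t j ltac:(lia) (ltnW lt_tj) lt_j small_t small_j.
  rewrite (INR_subn (ltnW lt_it)) in left; rewrite (INR_subn (ltnW lt_tj)) in right.
  by rewrite INR_subn; [lra | lia].
move/hasPn=> big_inside.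
move: le_ij; rewrite leq_eqVlt => /predU1P [<- | lt_ij].
  by rewrite Rminus_diag Rmult_0_r subnn INR_0; lra.
have inside t : (i < t < j)%N -> ~~ small_den n t.
  by move=> /andP [lt_it lt_tj]; apply: big_inside; rewrite mem_iota lt_it subnKC.
have seg := farey_segment (ltnW lt_ij) lt_j inside.
have lt_i := ltn_trans lt_ij lt_j.
have charges := charge_add_small (farey_den_gtR0 lt_i) (farey_den_gtR0 lt_j)
  (farey_small_denR small_i) (farey_small_denR small_j).
have gap := farey_val_lt lt_ij lt_j.
rewrite (_ : N ^ 2 / (8 * b i * b j) = N ^ 2 / 8 * (1 / (b i * b j))) in charges.
  have : 0 <= N ^ 2 / 8 by nra.
  nra.
by field; split; apply/Rgt_not_eq/farey_den_gtR0.
Qed.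

End FareyGaps.

Section AntiOrderedPair.

Variables n k l : nat.
Local Notation F := (farey n).
Local Notation N := (INR n).
Local Notation num := (farey_num n).
Local Notation den := (farey_den n).
Local Notation b i := (INR (den i)).
Local Notation w := (farey_val n).

Hypotheses (lt_kl : (k < l)%N) (lt_l : (l < size F)%N).
Hypotheses (num_lt : (num k < num l)%N) (den_lt : (den l < den k)%N).

Let lt_k : (k < size F)%N := ltn_trans lt_kl lt_l.

Lemma anti_ordered_num_den t : (k <= t <= l)%N -> (0 < num t < den t)%N.
Proof.
case/andP=> le_kt le_tl; have lt_t := leq_ltn_trans le_tl lt_l.
have [bk_gt0 _ _ cop_k] := farey_nth_spec lt_k.
have [bl_gt0 _ al_le_bl cop_l] := farey_nth_spec lt_l.
have [bt_gt0 _ _ _] := farey_nth_spec lt_t.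
have ak_gt0 : (0 < num k)%N.
  by rewrite lt0n; apply: contraTneq cop_k => ->; rewrite /coprime gcd0n; lia.
have al_lt_bl : (num l < den l)%N.
  by rewrite ltn_neqAle al_le_bl andbT; apply: contraTneq cop_l => ->; rewrite /coprime gcdnn; lia.
have := farey_nth_le le_kt lt_t; have := farey_nth_le le_tl lt_l.
nia.
Qed.

Lemma anti_ordered_val_gap : 1 + w l <= N * (w l - w k).
Proof.
have [bk_gt0 bk_le_n _ _] := farey_nth_spec lt_k.
have cross : (num k * den l + num l + den l <= num l * den k)%N by nia.
have bkR := farey_den_gtR0 lt_k; have blR := farey_den_gtR0 lt_l.
rewrite farey_val_sub // /farey_val.
move/INR_leq: cross; rewrite !plus_INR => cross.
have N_ge : b k <= N := INR_leq bk_le_n.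
set X := INR (num l * den k) - INR (num k * den l) in cross *.
have -> : 1 + INR (num l) / b l = (INR (num l) + b l) / b l by field; lra.
have -> : N * (X / (b k * b l)) = N / b k * (X / b l) by field; lra.
have N_over : 1 <= N / b k by apply: Rle_div_r; lra.
have X_over : (INR (num l) + b l) / b l <= X / b l.
  by apply: Rmult_le_compat_r; [apply/Rlt_le/Rinv_0_lt_compat | rewrite /X; lra].
have : 0 <= (INR (num l) + b l) / b l.
  by apply: Rmult_le_pos; [have := pos_INR (num l); lra | apply/Rlt_le/Rinv_0_lt_compat].
nra.
Qed.

Lemma anti_ordered_den_ge2 t : (k <= t <= l)%N -> 2 <= b t.
Proof. by move/anti_ordered_num_den => num_den; apply: (INR_leq (m := 2)); lia. Qed.

Lemma anti_ordered_val_ge t : (k <= t <= l)%N -> 1 / b t <= w t.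
Proof.
move=> range_t; have num_den := anti_ordered_num_den range_t.
have := anti_ordered_den_ge2 range_t; have : 1 <= INR (num t) by apply: (INR_leq (m := 1)); lia.
by move=> num_ge1 den_ge2; apply: Rmult_le_compat_r => //; apply/Rlt_le/Rinv_0_lt_compat; lra.
Qed.

Lemma anti_ordered_pivot p : (k <= p <= l)%N ->
  (forall t, (k <= t <= l)%N -> t != p -> ~~ small_den n t) -> N / 8 <= INR (l - k).
Proof.
move=> range_p big_off_p; case/andP: (range_p) => le_kp le_pl.
have lt_p := leq_ltn_trans le_pl lt_l.
have big_left t : (k <= t <= p)%N -> t != p -> ~~ small_den n t.
  by move=> range_t; apply: big_off_p; lia.
have big_right t : (p <= t <= l)%N -> t != p -> ~~ small_den n t.
  by move=> range_t; apply: big_off_p; lia.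
have p_last : p \in [:: k; p] := mem_last k [:: p].
have left := farey_segment_one_small le_kp lt_p p_last big_left.
have right := farey_segment_one_small le_pl lt_l (mem_head p [:: l]) big_right.
have ch_le := charge_le (pos_INR n) (farey_den_gtR0 lt_p).
have gap := anti_ordered_val_gap.
have den_ge2 := anti_ordered_den_ge2 range_p.
have val_le : 1 / b p <= w l.
  by apply: Rle_trans (anti_ordered_val_ge range_p) (farey_val_le le_pl lt_l).
rewrite (INR_subn (ltnW lt_kl)) (INR_subn le_kp) (INR_subn le_pl) in left right *.
have := Rmult_le_compat_l _ _ _ (pos_INR n) gap.
rewrite (_ : N / (4 * b p) = N * (1 / b p) / 4) in ch_le; last by field; lra.
have : 1 / b p <= 1 / 2.
  by apply: Rmult_le_compat_l; [lra | apply: Rinv_le_contravar; lra].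
set A := 1 / b p in ch_le val_le * => A_le.
have := Rmult_le_compat_l _ _ _ (pos_INR n) val_le.
have := Rmult_le_compat_l _ _ _ (pos_INR n) A_le.
lra.
Qed.

Lemma anti_ordered_two_small i j : (k <= i)%N -> (i < j)%N -> (j <= l)%N ->
  small_den n i -> small_den n j ->
  (forall t, (k <= t < i)%N -> ~~ small_den n t) ->
  (forall t, (j < t <= l)%N -> ~~ small_den n t) -> N / 12 <= INR (l - k).
Proof.
move=> le_ki lt_ij le_jl small_i small_j big_before big_after.
have lt_j := leq_ltn_trans le_jl lt_l; have lt_i := ltn_trans lt_ij lt_j.
have range_i : (k <= i <= l)%N by lia.
have range_j : (k <= j <= l)%N by lia.
have big_left t : (k <= t <= i)%N -> t != i -> ~~ small_den n t.
  by move=> range_t neq_ti; apply: big_before; rewrite ltn_neqAle neq_ti; lia.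
have big_right t : (j <= t <= l)%N -> t != j -> ~~ small_den n t.
  by move=> range_t neq_tj; apply: big_after; rewrite ltn_neqAle eq_sym neq_tj; lia.
have i_last : i \in [:: k; i] := mem_last k [:: i].
have left := farey_segment_one_small_half le_ki lt_i i_last big_left.
have middle := farey_chain (ltnW lt_ij) lt_j small_i small_j.
have right := farey_segment_one_small_half le_jl lt_l (mem_head j [:: l]) big_right.
(* 1/2 is the only Farey fraction with denominator 2. *)
have one_den_ge3 : 3 <= b i \/ 3 <= b j.
  have [num_i num_j] := (anti_ordered_num_den range_i, anti_ordered_num_den range_j).
  have lt_frac := farey_nth_lt lt_ij lt_j.
  case: (leqP 3 (den i)) => [le3 | den_i]; first by left; move: (INR_leq le3); rewrite INR_IZR_INZ.
  case: (leqP 3 (den j)) => [le3 | den_j]; first by right; move: (INR_leq le3); rewrite INR_IZR_INZ.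
  exfalso; nia.
have val_ge t : (k <= t <= l)%N -> 1 / b t <= w l.
  move=> range_t; apply: Rle_trans (anti_ordered_val_ge range_t) (farey_val_le _ lt_l).
  by case/andP: range_t.
have [val_i val_j] := (val_ge i range_i, val_ge j range_j).
have := Rmult_le_compat_l _ _ _ (pos_INR n) anti_ordered_val_gap.
rewrite (INR_subn (ltnW lt_kl)) (INR_subn le_ki) in left *.
rewrite (INR_subn (ltnW lt_ij)) (INR_subn le_jl) in middle right.
have bi_gt0 := farey_den_gtR0 lt_i; have bj_gt0 := farey_den_gtR0 lt_j.
rewrite (_ : N / (8 * b i) = N * (1 / b i) / 8) in left; last by field; lra.
rewrite (_ : N / (8 * b j) = N * (1 / b j) / 8) in right; last by field; lra.
have one_third : 1 / b i <= 1 / 3 \/ 1 / b j <= 1 / 3.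
  case: one_den_ge3 => ?; [left | right];
    by apply: Rmult_le_compat_l; [lra | apply: Rinv_le_contravar; lra].
set A := 1 / b i in val_i left one_third *; set B := 1 / b j in val_j right one_third *.
have := Rmult_le_compat_l _ _ _ (pos_INR n) val_i.
have := Rmult_le_compat_l _ _ _ (pos_INR n) val_j.
case: one_third => le_third; have := Rmult_le_compat_l _ _ _ (pos_INR n) le_third; lra.
Qed.

Lemma anti_ordered_far : N / 12 <= INR (l - k).
Proof.
have N_ge0 := pos_INR n.
pose P t := (k <= t <= l)%N && small_den n t.
case: (boolP (has P (iota k (l - k).+1))) => [/hasP [t0 _ P_t0] | /hasPn no_P].
  have exP : exists t, P t by exists t0.
  have P_le_l t : P t -> (t <= l)%N by case/andP=> /andP [].
  case: (ex_minnP exP) => i /andP [range_i small_i] min_i.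
  case: (ex_maxnP exP P_le_l) => j /andP [range_j small_j] max_j.
  have le_ij : (i <= j)%N by apply: min_i; rewrite /P range_j small_j.
  move: le_ij; rewrite leq_eqVlt => /predU1P [eq_ij | lt_ij].
    suff : N / 8 <= INR (l - k) by lra.
    apply: (anti_ordered_pivot range_i) => t range_t; apply: contra => small_t.
    have P_t : P t by rewrite /P range_t small_t.
    by rewrite eqn_leq min_i // eq_ij max_j.
  apply: (anti_ordered_two_small _ lt_ij _ small_i small_j) => [||t range_t|t range_t].
  - by case/andP: range_i.
  - by case/andP: range_j.
  - apply/negP => small_t; have := min_i t; rewrite /P small_t andbT.
    by case/andP: range_i => _ le_il; move=> /(_ ltac:(lia)); lia.
  - apply/negP => small_t; have := max_j t; rewrite /P small_t andbT.
    by case/andP: range_j => le_kj _; move=> /(_ ltac:(lia)); lia.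
suff : N / 8 <= INR (l - k) by lra.
have range_k : (k <= k <= l)%N by rewrite leqnn ltnW.
apply: (anti_ordered_pivot range_k) => t range_t _; apply: contraT; rewrite negbK => small_t.
by have := no_P t; rewrite /P range_t small_t mem_iota; apply; lia.
Qed.

End AntiOrderedPair.

Lemma cross_lt_similarly_ordered (p q r s : nat) : (p * s < r * q)%N ->
  ~~ ((p < r) && (s < q))%N -> ((Z.of_nat r - Z.of_nat p) * (Z.of_nat s - Z.of_nat q) >= 0)%Z.
Proof.
move=> lt_cross; rewrite negb_and -!leqNgt => /orP [le_rp | le_qs]; last first.
  by case: (leqP p r) => ?; nia.
have lt_sq : (s < q)%N by nia.
nia.
Qed.

Theorem theorem7 (n k l : nat) :
  (0 < n)%N ->
  (k < l)%N -> (l < size (farey n))%N ->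
  Rle (INR (l - k)%N)
      (Rmult (Rdiv (INR n) 12) (Rminus 1 (Rdiv 4 (Rpower (INR n) (Rdiv 1 3))))) ->
  ((Z.of_nat (farey_num n l) - Z.of_nat (farey_num n k)) *
   (Z.of_nat (farey_den n l) - Z.of_nat (farey_den n k)) >= 0)%Z.
Proof.
move=> n_gt0 lt_kl lt_l close.
apply: cross_lt_similarly_ordered (farey_nth_lt lt_kl lt_l) _.
apply/negP => /andP [num_lt den_lt].
(* l - k >= n/12 already contradicts the hypothesis; 4/n^(1/3) only needs to be positive. *)
have far := anti_ordered_far lt_kl lt_l num_lt den_lt.
have root_gt0 : 0 < Rpower (INR n) (1 / 3) by apply: exp_pos.
have n_gtR0 : 0 < INR n := INR_gt0 n_gt0.
have : 0 < INR n / 12 * (4 / Rpower (INR n) (1 / 3)).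
  by apply: Rmult_lt_0_compat; apply: Rdiv_lt_0_compat; lra.
rewrite Rmult_minus_distr_l Rmult_1_r in close.
lra.
Qed.
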